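(* Let $H$ be a Hopf algebra with bijective antipode and $(H_i)_{0\le i\le n}$ a decreasing Hopf algebra filtration of $H$ with $H_n=\{0\}$ (and $H_i=0$ for $i\ge n$). Let $V$ be a Yetter--Drinfeld module over $H$ with coaction $\delta$, and put $\mathcal F^iV=H_iV$ for all $i\ge0$. Then $\delta(\mathcal F^iV)\subseteq\sum_{k\ge0}H_k\otimes\mathcal F^{i-k}V$ for all $i\ge0$, and $(\mathcal F^iV)_{i\ge0}$ is a decreasing filtration of the braided vector space $V$.
   Context: A decreasing Hopf algebra filtration of $H$ is a family of subspaces $(H_i)_{i\ge0}$ with $H_0=H$, $H_i\supseteq H_j$ for $i\le j$, $H_iH_j\subseteq H_{i+j}$, $\Delta(H_i)\subseteq\sum_{j=0}^iH_j\otimes H_{i-j}$, and $\varepsilon(H_i)=0$, $S(H_i)\subseteq H_i$ for $i\ge1$. The braiding of $V$ is $c(v\otimes w)=v_{(-1)}w\otimes v_{(0)}$. A decreasing filtration of a braided vector space $(V,c)$ is a family $(\mathcal F^iV)_{i\ge0}$ with $V=\mathcal F^0V\supseteq\mathcal F^kV\supseteq\mathcal F^lV$ for $k\le l$, $\bigcap_i\mathcal F^iV=0$, and $c(\mathcal F^iV\otimes\mathcal F^jV)\subseteq\sum_{k+l\ge i+j}\mathcal F^kV\otimes\mathcal F^lV$. Here $\mathcal F^{j}V=V$ for $j<0$. *)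

(* Hopf algebras / Yetter--Drinfeld modules over a field K,
   with tensors represented by finite lists of pairs (Sweedler-style
   representatives); equality of tensors is tested against all bilinear
   (resp. trilinear) forms, which over a field characterizes equality in the
   tensor product. *)
From HB Require Import structures.
From mathcomp Require Import all_boot all_order all_algebra.
Set Implicit Arguments. Unset Strict Implicit. Unset Printing Implicit Defensive.
Import GRing.Theory.
Local Open Scope ring_scope.

Section Tensors.
Variable K : fieldType.

Definition bilinear_form (A B : lmodType K) (phi : A -> B -> K) :=
  (forall b (c : K) x y, phi (c *: x + y) b = c * phi x b + phi y b) /\
  (forall a (c : K) x y, phi a (c *: x + y) = c * phi a x + phi a y).

Definition trilinear_form (A B C : lmodType K) (phi : A -> B -> C -> K) :=
  (forall b d (c : K) x y, phi (c *: x + y) b d = c * phi x b d + phi y b d) /\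
  (forall a d (c : K) x y, phi a (c *: x + y) d = c * phi a x d + phi a y d) /\
  (forall a b (c : K) x y, phi a b (c *: x + y) = c * phi a b x + phi a b y).

Definition teq (A B : lmodType K) (s t : seq (A * B)) :=
  forall phi : A -> B -> K, bilinear_form phi ->
    \sum_(p <- s) phi p.1 p.2 = \sum_(p <- t) phi p.1 p.2.

Definition teq3 (A B C : lmodType K) (s t : seq (A * B * C)) :=
  forall phi : A -> B -> C -> K, trilinear_form phi ->
    \sum_(p <- s) phi p.1.1 p.1.2 p.2 = \sum_(p <- t) phi p.1.1 p.1.2 p.2.

Definition tscale (A B : lmodType K) (c : K) (s : seq (A * B)) :=
  [seq (c *: p.1, p.2) | p <- s].

Definition tspan (A B : lmodType K) (R : A -> B -> Prop) (s : seq (A * B)) :=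
  exists t : seq (A * B), (forall p, p \in t -> R p.1 p.2) /\ teq s t.

Definition subspace (A : lmodType K) (U : A -> Prop) :=
  U 0 /\ forall (c : K) x y, U x -> U y -> U (c *: x + y).

End Tensors.

Section Hopf.
Variables (K : fieldType) (H : algType K).

Definition is_bialgebra (Delta : H -> seq (H * H)) (eps : H -> K) :=
  (forall (c : K) x y, teq (Delta (c *: x + y)) (tscale c (Delta x) ++ Delta y)) /\
  (forall h, teq3 [seq (q.1, q.2, p.2) | p <- Delta h, q <- Delta p.1]
                  [seq (p.1, q.1, q.2) | p <- Delta h, q <- Delta p.2]) /\
  (forall h, \sum_(p <- Delta h) eps p.1 *: p.2 = h) /\
  (forall h, \sum_(p <- Delta h) eps p.2 *: p.1 = h) /\
  (forall g h, teq (Delta (g * h)) [seq (p.1 * q.1, p.2 * q.2) | p <- Delta g, q <- Delta h]) /\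
  teq (Delta 1) [:: (1, 1)] /\
  (forall (c : K) x y, eps (c *: x + y) = c * eps x + eps y) /\
  (forall g h, eps (g * h) = eps g * eps h) /\
  eps 1 = 1.

Definition is_antipode (Delta : H -> seq (H * H)) (eps : H -> K) (S : H -> H) :=
  (forall (c : K) x y, S (c *: x + y) = c *: S x + S y) /\
  (forall h, \sum_(p <- Delta h) S p.1 * p.2 = eps h *: 1) /\
  (forall h, \sum_(p <- Delta h) p.1 * S p.2 = eps h *: 1).

Definition is_hopf_bij (Delta : H -> seq (H * H)) (eps : H -> K) (S : H -> H) :=
  is_bialgebra Delta eps /\ is_antipode Delta eps S /\ bijective S.

Definition hopf_filtration (Delta : H -> seq (H * H)) (eps : H -> K) (S : H -> H)
    (Hf : nat -> H -> Prop) :=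
  (forall i, subspace (Hf i)) /\
  (forall h, Hf 0%N h) /\
  (forall i j, (i <= j)%N -> forall h, Hf j h -> Hf i h) /\
  (forall i j g h, Hf i g -> Hf j h -> Hf (i + j)%N (g * h)) /\
  (forall i h, Hf i h ->
     tspan (fun a b => exists j, (j <= i)%N /\ Hf j a /\ Hf (i - j)%N b) (Delta h)) /\
  (forall i h, (0 < i)%N -> Hf i h -> eps h = 0) /\
  (forall i h, (0 < i)%N -> Hf i h -> Hf i (S h)).

(* left-left Yetter--Drinfeld module: left H-module (act), left H-comodule
   (delta : v |-> v_(-1) (x) v_(0)), with compatibility
   (h_(1) v)_(-1) h_(2) (x) (h_(1) v)_(0) = h_(1) v_(-1) (x) h_(2) v_(0). *)
Definition is_YD (Delta : H -> seq (H * H)) (eps : H -> K) (V : lmodType K)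
    (act : H -> V -> V) (delta : V -> seq (H * V)) :=
  (forall h (c : K) x y, act h (c *: x + y) = c *: act h x + act h y) /\
  (forall v (c : K) g h, act (c *: g + h) v = c *: act g v + act h v) /\
  (forall v, act 1 v = v) /\
  (forall g h v, act (g * h) v = act g (act h v)) /\
  (forall (c : K) x y, teq (delta (c *: x + y)) (tscale c (delta x) ++ delta y)) /\
  (forall v, teq3 [seq (q.1, q.2, p.2) | p <- delta v, q <- Delta p.1]
                  [seq (p.1, q.1, q.2) | p <- delta v, q <- delta p.2]) /\
  (forall v, \sum_(p <- delta v) eps p.1 *: p.2 = v) /\
  (forall h v, teq [seq (q.1 * p.2, q.2) | p <- Delta h, q <- delta (act p.1 v)]
                   [seq (p.1 * q.1, act p.2 q.2) | p <- Delta h, q <- delta v]).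

Definition FV (V : lmodType K) (act : H -> V -> V) (Hf : nat -> H -> Prop)
    (i : nat) (v : V) :=
  exists s : seq (H * V), (forall p, p \in s -> Hf i p.1) /\
                          v = \sum_(p <- s) act p.1 p.2.

(* F^{i-k} V, with the convention F^j V = V for j < 0 *)
Definition FVshift (V : lmodType K) (act : H -> V -> V) (Hf : nat -> H -> Prop)
    (i k : nat) : V -> Prop :=
  if (k <= i)%N then FV act Hf (i - k)%N else fun _ => True.

Definition braid (V : lmodType K) (act : H -> V -> V) (delta : V -> seq (H * V))
    (s : seq (V * V)) : seq (V * V) :=
  [seq (act q.1 p.2, q.2) | p <- s, q <- delta p.1].

Definition braided_filtration (V : lmodType K) (act : H -> V -> V)
    (delta : V -> seq (H * V)) (F : nat -> V -> Prop) :=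
  (forall i, subspace (F i)) /\
  (forall v, F 0%N v) /\
  (forall k l, (k <= l)%N -> forall v, F l v -> F k v) /\
  (forall v, (forall i, F i v) -> v = 0) /\
  (forall i j (s : seq (V * V)), (forall p, p \in s -> F i p.1 /\ F j p.2) ->
     tspan (fun x y => exists k l, (i + j <= k + l)%N /\ F k x /\ F l y)
           (braid act delta s)).

End Hopf.

(* The heart of the argument is
   the identity, valid in every Yetter--Drinfeld module,
        delta (h v) = h_(1)(1) v_(-1) S(h_(2)) (x) h_(1)(2) v_(0),
   obtained by inserting h_(2) S(h_(3)) = eps(h_(2)) 1, re-associating with
   coassociativity and applying the Yetter--Drinfeld compatibility.  For h in
   H_i the filtration axioms on the coproduct and the antipode place the three
   factors h_(1)(1), h_(1)(2), S(h_(2)) in H_a, H_b, H_c with a + b + c = i, so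
   delta (h v) lies in sum_(k <= i) H_k (x) F^(i-k) V, and by linearity so does
   delta (F^i V).  The braiding c(v (x) w) = v_(-1) w (x) v_(0) therefore maps
   F^i V (x) F^j V into sum_k F^(k+j) V (x) F^(i-k) V; the remaining axioms of
   a filtration of V are immediate (F^n V = 0 because H_n = 0). *)
From HB Require Import structures.
From mathcomp Require Import all_boot all_order all_algebra.
From mathcomp Require Import zify.
Import GRing.Theory.
Local Open Scope ring_scope.

Section TensorCalculus.
Set Implicit Arguments.
Unset Strict Implicit.
Variable K : fieldType.

Lemma linearf0 (A B : lmodType K) (f : A -> B) : linear f -> f 0 = 0.
Proof.
move=> /(_ 1 0 0); rewrite scaler0 addr0 scale1r.
by move=> /(congr1 (fun x => x - f 0)); rewrite addrK subrr.
Qed.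

Lemma linearfD (A B : lmodType K) (f : A -> B) x y :
  linear f -> f (x + y) = f x + f y.
Proof. by move=> /(_ 1 x y); rewrite !scale1r. Qed.

Lemma linearfZ (A B : lmodType K) (f : A -> B) c x :
  linear f -> f (c *: x) = c *: f x.
Proof. by move=> lin_f; have := lin_f c x 0; rewrite addr0 linearf0 // addr0. Qed.

Lemma linearf_sum (A B : lmodType K) (I : Type) (f : A -> B) (s : seq I)
    (F : I -> A) :
  linear f -> f (\sum_(i <- s) F i) = \sum_(i <- s) f (F i).
Proof.
move=> lin_f; elim: s => [|a s IH]; first by rewrite !big_nil linearf0.
by rewrite !big_cons linearfD // IH.
Qed.

Lemma scalarf0 (A : lmodType K) (f : A -> K) : scalar f -> f 0 = 0.
Proof.
move=> /(_ 1 0 0); rewrite scaler0 addr0 mul1r.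
by move=> /(congr1 (fun x => x - f 0)); rewrite addrK subrr.
Qed.

Lemma scalarfZ (A : lmodType K) (f : A -> K) c x :
  scalar f -> f (c *: x) = c * f x.
Proof. by move=> lin_f; have := lin_f c x 0; rewrite addr0 scalarf0 // addr0. Qed.

Lemma scalarfD (A : lmodType K) (f : A -> K) x y :
  scalar f -> f (x + y) = f x + f y.
Proof. by move=> /(_ 1 x y); rewrite scale1r mul1r. Qed.

Lemma scalarf_sum (A : lmodType K) (I : Type) (f : A -> K) (s : seq I)
    (F : I -> A) :
  scalar f -> f (\sum_(i <- s) F i) = \sum_(i <- s) f (F i).
Proof.
move=> lin_f; elim: s => [|a s IH]; first by rewrite !big_nil scalarf0.
by rewrite !big_cons scalarfD // IH.
Qed.

Lemma linear_comp (A B C : lmodType K) (f : B -> C) (g : A -> B) :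
  linear f -> linear g -> linear (fun x => f (g x)).
Proof. by move=> lin_f lin_g c x y; rewrite lin_g lin_f. Qed.

Lemma scalar_comp (A B : lmodType K) (f : B -> K) (g : A -> B) :
  scalar f -> linear g -> scalar (fun x => f (g x)).
Proof. by move=> lin_f lin_g c x y; rewrite lin_g lin_f. Qed.

Lemma scalar_sum_fun (A : lmodType K) (I : Type) (s : seq I) (F : I -> A -> K) :
  (forall i, scalar (F i)) -> scalar (fun x => \sum_(i <- s) F i x).
Proof.
move=> lin_F c x y; rewrite mulr_sumr -big_split /=.
by apply: eq_bigr => i _; apply: lin_F.
Qed.

Lemma linear_mull (H : algType K) (a : H) : linear (fun x : H => a * x).
Proof. by move=> c x y; rewrite mulrDr scalerAr. Qed.

Lemma linear_mulr (H : algType K) (b : H) : linear (fun x : H => x * b).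
Proof. by move=> c x y; rewrite mulrDl scalerAl. Qed.

Lemma trilinear_fix3 (A B C : lmodType K) (G : A -> B -> C -> K) z :
  trilinear_form G -> bilinear_form (fun x y => G x y z).
Proof. by move=> [linG1 [linG2 _]]; split=> [y | x]; [apply: linG1 | apply: linG2]. Qed.

Definition tensor_linear (A B C : lmodType K) (d : A -> seq (B * C)) :=
  forall (c : K) x y, teq (d (c *: x + y)) (tscale c (d x) ++ d y).

Lemma teq_scalar (A B C : lmodType K) (d : A -> seq (B * C)) (phi : B -> C -> K) :
  tensor_linear d -> bilinear_form phi ->
  scalar (fun x => \sum_(p <- d x) phi p.1 p.2).
Proof.
move=> lin_d bil_phi c x y /=.
rewrite (lin_d c x y phi bil_phi) big_cat big_map /= mulr_sumr.
by congr (_ + _); apply: eq_bigr => p _; exact: (scalarfZ c p.1 (bil_phi.1 p.2)).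
Qed.

Lemma teq_sum (A B C : lmodType K) (I : Type) (d : A -> seq (B * C)) (s : seq I)
    (F : I -> A) :
  tensor_linear d -> teq (d (\sum_(i <- s) F i)) (flatten [seq d (F i) | i <- s]).
Proof.
move=> lin_d phi bil_phi.
by rewrite (scalarf_sum _ _ (teq_scalar lin_d bil_phi)) big_flatten big_map.
Qed.

Lemma teq_map_fst (A A' B : lmodType K) (f : A -> A') (s t : seq (A * B)) :
  linear f -> teq s t ->
  teq [seq (f p.1, p.2) | p <- s] [seq (f p.1, p.2) | p <- t].
Proof.
move=> lin_f eq_st phi [linphi1 linphi2]; rewrite !big_map /=.
apply: (eq_st (fun x y => phi (f x) y)); split=> [y | x]; last exact: linphi2.
exact: scalar_comp (linphi1 y) lin_f.
Qed.

Lemma sum_represent (C : Type) (Q : C -> Prop) (A B : eqType) (P : B -> Prop)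
    (s : seq A) (F : C -> A -> K) (g : C -> B -> K) :
  (forall x, x \in s -> exists t : seq B, (forall e, e \in t -> P e) /\
       forall c, Q c -> F c x = \sum_(e <- t) g c e) ->
  exists t : seq B, (forall e, e \in t -> P e) /\
       forall c, Q c -> \sum_(x <- s) F c x = \sum_(e <- t) g c e.
Proof.
elim: s => [|a s IH] reprs; first by exists [::]; split=> // c _; rewrite !big_nil.
have [ta [Pta Eta]] := reprs a (mem_head a s).
have [ts [Pts Ets]] : exists t : seq B, (forall e, e \in t -> P e) /\
    forall c, Q c -> \sum_(x <- s) F c x = \sum_(e <- t) g c e.
  by apply: IH => x xs; apply: reprs; rewrite inE xs orbT.
exists (ta ++ ts); split; last by move=> c Qc; rewrite big_cons big_cat Eta // Ets.
by move=> e; rewrite mem_cat => /orP [/Pta | /Pts].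
Qed.

Lemma tspan_mem (A B : lmodType K) (R : A -> B -> Prop) (s : seq (A * B)) :
  (forall p, p \in s -> R p.1 p.2) -> tspan R s.
Proof. by move=> Rs; exists s. Qed.

Lemma tspan_teq (A B : lmodType K) (R : A -> B -> Prop) (s t : seq (A * B)) :
  teq s t -> tspan R t -> tspan R s.
Proof.
move=> eq_st [u [Ru eq_tu]]; exists u; split=> // phi bil_phi.
by rewrite eq_st // eq_tu.
Qed.

Lemma tspan_mono (A B : lmodType K) (R R' : A -> B -> Prop) (s : seq (A * B)) :
  (forall x y, R x y -> R' x y) -> tspan R s -> tspan R' s.
Proof. by move=> RR' [t [Rt eq_st]]; exists t; split=> // p /Rt /RR'. Qed.

Lemma tspan_flatten (I : eqType) (A B : lmodType K) (R : A -> B -> Prop)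
    (s : seq I) (f : I -> seq (A * B)) :
  (forall x, x \in s -> tspan R (f x)) -> tspan R (flatten [seq f x | x <- s]).
Proof.
move=> span_f.
have [t [Rt Et]] := sum_represent (Q := @bilinear_form K A B)
  (F := fun phi x => \sum_(p <- f x) phi p.1 p.2)
  (g := fun phi (p : A * B) => phi p.1 p.2) (P := fun p => R p.1 p.2) span_f.
by exists t; split=> // phi bil_phi; rewrite big_flatten big_map Et.
Qed.

End TensorCalculus.

Section YetterDrinfeld.
Set Implicit Arguments.
Unset Strict Implicit.
Variables (K : fieldType) (H : algType K).
Variables (Delta : H -> seq (H * H)) (eps : H -> K) (S : H -> H).
Variables (V : lmodType K) (act : H -> V -> V) (delta : V -> seq (H * V)).
Variable Hf : nat -> H -> Prop.
Hypothesis bialg : is_bialgebra Delta eps.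
Hypothesis antip : is_antipode Delta eps S.
Hypothesis YD : is_YD Delta eps act delta.
Hypothesis filt : hopf_filtration Delta eps S Hf.

Let Delta_linear : tensor_linear Delta := bialg.1.
Let S_linear : linear S := antip.1.
Let act_linear_r : forall h, linear (act h) := YD.1.
Let act_linear_l : forall v, linear (act^~ v) := YD.2.1.
Let delta_linear : tensor_linear delta := YD.2.2.2.2.1.

Definition coprod2S (h : H) : seq (H * H * H) :=
  [seq (r.1, r.2, S p.2) | p <- Delta h, r <- Delta p.1].

(* Inserting h_(2) S(h_(3)) = eps(h_(2)) 1 into the coaction of h v. *)
Lemma delta_act_antipode h v (phi : H -> V -> K) : bilinear_form phi ->
  \sum_(q <- delta (act h v)) phi q.1 q.2 =
  \sum_(p <- Delta h) \sum_(r <- Delta p.2) \sum_(q <- delta (act p.1 v))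
     phi (q.1 * r.1 * S r.2) q.2.
Proof.
move=> bil_phi; have [linphi1 _] := bil_phi.
have [_ [_ [_ [counit_r _]]]] := bialg; have [_ [_ antipode_r]] := antip.
pose f x := \sum_(q <- delta (act x v)) phi q.1 q.2.
have lin_f : scalar f.
  exact: scalar_comp (teq_scalar delta_linear bil_phi) (act_linear_l v).
rewrite -[X in act X v]counit_r -/(f _) scalarf_sum //.
apply: eq_bigr => p _; rewrite scalarfZ // exchange_big mulr_sumr /=.
apply: eq_bigr => q _.
have -> : eps p.2 * phi q.1 q.2 = phi (eps p.2 *: q.1) q.2.
  exact/esym/(scalarfZ _ _ (linphi1 q.2)).
have -> : eps p.2 *: q.1 = q.1 * (eps p.2 *: 1) by rewrite -scalerAr mulr1.
rewrite -antipode_r mulr_sumr.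
rewrite (scalarf_sum _ _ (linphi1 q.2)).
by apply: eq_bigr => r _; rewrite mulrA.
Qed.

Lemma delta_act h v :
  teq (delta (act h v))
      [seq (e.1.1 * q.1 * e.2, act e.1.2 q.2) | e <- coprod2S h, q <- delta v].
Proof.
move=> phi bil_phi; have [linphi1 linphi2] := bil_phi.
have [_ [coassoc _]] := bialg; have [_ [_ [_ [_ [_ [_ [_ compat]]]]]]] := YD.
pose G a b c := \sum_(q <- delta (act a v)) phi (q.1 * b * S c) q.2.
have bil_right b c : bilinear_form (fun x y => phi (x * b * S c) y).
  split=> [y | x]; last exact: linphi2.
  apply: scalar_comp (linphi1 y) _.
  exact: linear_comp (linear_mulr _) (linear_mulr _).
have tri_G : trilinear_form G.
  split; first by move=> b c;
    exact: scalar_comp (teq_scalar delta_linear (bil_right b c)) (act_linear_l v).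
  split=> [a c | a b]; apply: scalar_sum_fun => q.
    apply: scalar_comp (linphi1 _) _.
    exact: linear_comp (linear_mulr _) (linear_mull _).
  apply: scalar_comp (linphi1 _) _.
  exact: linear_comp (linear_mull _) S_linear.
rewrite delta_act_antipode //.
have := coassoc h G tri_G; rewrite !big_allpairs_dep /= => <-.
apply: eq_bigr => p _.
have bil_S : bilinear_form (fun x y => phi (x * S p.2) y).
  split=> [y | x]; last exact: linphi2.
  exact: scalar_comp (linphi1 y) (linear_mulr _).
by have := compat p.1 v _ bil_S; rewrite !big_allpairs_dep.
Qed.

Lemma contract_teq v (s t : seq (H * H * H)) :
  teq3 s t ->
  teq [seq (e.1.1 * q.1 * e.2, act e.1.2 q.2) | e <- s, q <- delta v]
      [seq (e.1.1 * q.1 * e.2, act e.1.2 q.2) | e <- t, q <- delta v].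
Proof.
move=> eq_st phi [linphi1 linphi2]; rewrite !big_allpairs_dep /=.
apply: (eq_st (fun x y z => \sum_(q <- delta v) phi (x * q.1 * z) (act y q.2))).
split; [|split]; [move=> y z | move=> x z | move=> x y]; apply: scalar_sum_fun => q.
- apply: scalar_comp (linphi1 _) _.
  exact: linear_comp (linear_mulr _) (linear_mulr _).
- exact: scalar_comp (linphi2 _) (act_linear_l _).
- exact: scalar_comp (linphi1 _) (linear_mull _).
Qed.

Definition triple_of_degree (i : nat) (e : H * H * H) :=
  exists a b c, (a + b + c = i)%N /\ Hf a e.1.1 /\ Hf b e.1.2 /\ Hf c e.2.

Lemma coprod2S_filtered i h : Hf i h ->
  exists T, (forall e, e \in T -> triple_of_degree i e) /\ teq3 (coprod2S h) T.
Proof.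
move=> Hh; have [_ [Hf0 [_ [_ [Hf_coprod [_ Hf_S]]]]]] := filt.
have [t [deg_t eq_t]] := Hf_coprod i h Hh.
case: (sum_represent (Q := @trilinear_form K H H H) (s := t)
  (F := fun G p => \sum_(r <- Delta p.1) G r.1 r.2 (S p.2))
  (g := fun G (e : H * H * H) => G e.1.1 e.1.2 e.2) (P := triple_of_degree i))
  => [p pt | T [deg_T eq_T]].
  have [j [le_ji [Hj1 Hj2]]] := deg_t p pt.
  have [t' [deg_t' eq_t']] := Hf_coprod j p.1 Hj1.
  exists [seq (r.1, r.2, S p.2) | r <- t']; split.
    move=> e /mapP [r rt' ->] /=; have [j' [le_j'j [Hr1 Hr2]]] := deg_t' r rt'.
    exists j', (j - j')%N, (i - j)%N; split; first lia.
    split=> //; split=> //.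
    by case: (posnP (i - j)) => [-> | pos]; [apply: Hf0 | apply: Hf_S].
  by move=> G tri_G; rewrite big_map; exact: (eq_t' _ (trilinear_fix3 (S p.2) tri_G)).
exists T; split=> // G tri_G; rewrite big_allpairs_dep /= -eq_T //.
apply: (eq_t (fun a c => \sum_(r <- Delta a) G r.1 r.2 (S c))).
split=> [c | a]; first exact: teq_scalar Delta_linear (trilinear_fix3 _ tri_G).
apply: scalar_sum_fun => r.
exact: scalar_comp (tri_G.2.2 r.1 r.2) S_linear.
Qed.

Lemma Hf_sandwich a c (x y z : H) : Hf a x -> Hf c z -> Hf (a + c) (x * y * z).
Proof.
have [_ [Hf0 [_ [Hf_mul _]]]] := filt => Hx Hz.
by have := Hf_mul _ _ _ _ (Hf_mul _ _ _ _ Hx (Hf0 y)) Hz; rewrite addn0.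
Qed.

Lemma FV_act k g w : Hf k g -> FV act Hf k (act g w).
Proof.
move=> Hg; exists [:: (g, w)]; split; last by rewrite big_seq1.
by move=> p; rewrite inE => /eqP ->.
Qed.

Lemma FV_act_FV k j g w : Hf k g -> FV act Hf j w -> FV act Hf (k + j) (act g w).
Proof.
have [_ [_ [_ [Hf_mul _]]]] := filt; have [_ [_ [_ [act_mul _]]]] := YD.
move=> Hg [s [Hs ->]]; exists [seq (g * p.1, p.2) | p <- s]; split.
  by move=> _ /mapP [p ps ->]; apply: Hf_mul (Hs p ps).
rewrite big_map (linearf_sum _ _ (act_linear_r g)).
by apply: eq_bigr => p _; rewrite act_mul.
Qed.

Definition coaction_piece (i : nat) (g : H) (u : V) :=
  exists k, (k <= i)%N /\ Hf k g /\ FV act Hf (i - k) u.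

Lemma delta_act_filtered i h v : Hf i h -> tspan (coaction_piece i) (delta (act h v)).
Proof.
move=> Hh; have [T [deg_T eq_T]] := coprod2S_filtered Hh.
apply: tspan_teq (delta_act h v) _; apply: tspan_teq (contract_teq v eq_T) _.
apply: tspan_mem => _ /allpairsPdep [e [q [eT _ ->]]] /=.
have [a [b [c [abc [Ha [Hb Hc]]]]]] := deg_T e eT.
exists (a + c)%N; split; first lia; split; first exact: Hf_sandwich.
have -> : (i - (a + c) = b)%N by lia.
exact: FV_act.
Qed.

Lemma delta_filtered i v : FV act Hf i v -> tspan (coaction_piece i) (delta v).
Proof.
move=> [s [Hs ->]].
apply: tspan_teq (teq_sum s (fun p => act p.1 p.2) delta_linear) _.
by apply: tspan_flatten => p ps; apply: delta_act_filtered (Hs p ps).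
Qed.

Lemma braid_filtered i j (s : seq (V * V)) :
  (forall p, p \in s -> FV act Hf i p.1 /\ FV act Hf j p.2) ->
  tspan (fun x y => exists k l, (i + j <= k + l)%N /\ FV act Hf k x /\ FV act Hf l y)
        (braid act delta s).
Proof.
move=> Hs; apply: tspan_flatten => p /Hs [Fi Fj].
have [T [deg_T eq_T]] := delta_filtered Fi.
apply: tspan_teq (teq_map_fst (act_linear_l p.2) eq_T) _.
apply: tspan_mem => _ /mapP [y yT ->] /=.
have [k [le_ki [Hk Fu]]] := deg_T y yT.
exists (k + j)%N, (i - k)%N; split; first lia.
by split=> //; apply: FV_act_FV.
Qed.

Lemma FV_subspace i : subspace (FV act Hf i).
Proof.
have [Hf_sub _] := filt; have [Hf_sub0 Hf_subZD] := Hf_sub i.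
split; first by exists [::]; rewrite big_nil.
move=> c _ _ [s1 [Hs1 ->]] [s2 [Hs2 ->]].
exists ([seq (c *: p.1, p.2) | p <- s1] ++ s2); split.
  move=> p; rewrite mem_cat => /orP [/mapP [q qs ->] | /Hs2 //] /=.
  by rewrite -[c *: _]addr0; apply: Hf_subZD (Hs1 q qs) Hf_sub0.
rewrite big_cat big_map scaler_sumr; congr (_ + _); apply: eq_bigr => p _.
exact/esym/(linearfZ c p.1 (act_linear_l p.2)).
Qed.

Lemma FV_whole v : FV act Hf 0 v.
Proof.
have [_ [Hf0 _]] := filt; have [_ [_ [act1 _]]] := YD.
exists [:: (1, v)]; split; last by rewrite big_seq1 act1.
by move=> p; rewrite inE => /eqP ->.
Qed.

Lemma FV_mono k l : (k <= l)%N -> forall v, FV act Hf l v -> FV act Hf k v.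
Proof.
have [_ [_ [Hf_mono _]]] := filt.
by move=> le_kl v [s [Hs ->]]; exists s; split=> // p /Hs; apply: Hf_mono.
Qed.

Lemma FV_top n v : (forall i h, (n <= i)%N -> Hf i h -> h = 0) ->
  FV act Hf n v -> v = 0.
Proof.
move=> Hn [s [Hs ->]]; apply: big1_seq => p /Hs Hp.
by rewrite (Hn n p.1 (leqnn n) Hp); apply: (linearf0 (act_linear_l _)).
Qed.

End YetterDrinfeld.

Theorem mainTheorem12 (K : fieldType) (H : algType K)
  (Delta : H -> seq (H * H)) (eps : H -> K) (S : H -> H)
  (Hf : nat -> H -> Prop) (n : nat)
  (V : lmodType K) (act : H -> V -> V) (delta : V -> seq (H * V)) :
  is_hopf_bij Delta eps S ->
  hopf_filtration Delta eps S Hf ->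
  (forall i h, (n <= i)%N -> Hf i h -> h = 0) ->
  is_YD Delta eps act delta ->
  (forall i v, FV act Hf i v ->
     tspan (fun h w => exists k, Hf k h /\ FVshift act Hf i k w) (delta v)) /\
  braided_filtration act delta (FV act Hf).
Proof.
move=> [bialg [antip _]] filt Hn YD; split.
  move=> i v Fv; apply: (tspan_mono _ (delta_filtered bialg antip YD filt Fv)).
  by move=> g u [k [le_ki [Hk Fu]]]; exists k; split=> //; rewrite /FVshift le_ki.
split; first exact: FV_subspace YD filt.
split; first exact: FV_whole YD filt.
split; first exact: FV_mono filt.
split; first by move=> v /(_ n) /(FV_top YD Hn).
exact: (braid_filtered bialg antip YD filt).
Qed.
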